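(* For integers $s\ge t\ge 2$, $${\rm dim}_s(K_{1,s}\diamond K_{1,t})=\begin{cases} st+s-1 & \text{if } t=2,\\ st+s & \text{if } t>2.\end{cases}$$
   Context: The modular product $G\diamond H$ has vertex set $V(G)\times V(H)$; distinct vertices $(g,h)$ and $(g',h')$ are adjacent iff ($g=g'$ and $hh'\in E(H)$), or ($gg'\in E(G)$ and $h=h'$), or ($gg'\in E(G)$ and $hh'\in E(H)$), or ($g\neq g'$, $h\neq h'$, $gg'\notin E(G)$ and $hh'\notin E(H)$). For a connected graph $X$, a vertex $z$ strongly resolves distinct vertices $x,y$ if $d_X(y,z)=d_X(y,x)+d_X(x,z)$ or $d_X(x,z)=d_X(x,y)+d_X(y,z)$; a strong metric generator is a set $S\subseteq V(X)$ such that every pair of distinct vertices is strongly resolved by some vertex of $S$; ${\rm dim}_s(X)$, the strong metric dimension, is the minimum cardinality of a strong metric generator. $K_{1,s}$ is the star with $s$ leaves. *)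

(* Simple graphs as symmetric irreflexive relations on a finType. *)
From mathcomp Require Import all_boot.
Set Implicit Arguments. Unset Strict Implicit. Unset Printing Implicit Defensive.

Section Graphs.
Variable T : finType.
Implicit Types (e : rel T) (x y z : T) (S : {set T}).

Definition walk_of_len e x y (n : nat) : bool :=
  [exists p : n.-tuple T, path e x p && (last x p == y)].

(* graph distance: length of a shortest walk from x to y.  In a connected
   graph this is < #|T|; the value #|T| is returned when y is unreachable. *)
Definition dist e x y : nat := find (walk_of_len e x y) (iota 0 #|T|).

Definition strongly_resolves e z x y : bool :=
  (dist e y z == dist e y x + dist e x z) || (dist e x z == dist e x y + dist e y z).

Definition strong_metric_generator e S : bool :=
  [forall x, forall y, (x != y) ==> [exists z in S, strongly_resolves e z x y]].

(* strong metric dimension: minimum cardinality of a strong metric generator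
   (the whole vertex set is always one) *)
Definition sdim e : nat :=
  #|[arg min_(S < [set: T] | strong_metric_generator e S) #|S|]|.

End Graphs.

(* the star K_{1,s}: vertex set 'I_(s+1), centre ord0, leaves 1..s *)
Definition star (s : nat) : rel 'I_s.+1 :=
  fun i j => (i != j) && ((i == ord0) || (j == ord0)).
Arguments star s : clear implicits.

Definition modular_product (TG TH : finType) (eG : rel TG) (eH : rel TH)
  : rel (TG * TH) :=
  fun u v =>
    let: (g, h) := u in let: (g', h') := v in
    (u != v) &&
    [|| (g == g') && eH h h',
        eG g g' && (h == h'),
        eG g g' && eH h h'
      | [&& g != g', h != h', ~~ eG g g' & ~~ eH h h']].

From mathcomp Require Import all_boot.
From mathcomp Require Import zify.
Set Implicit Arguments. Unset Strict Implicit. Unset Printing Implicit Defensive.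

(* The centre (0,0) of K_{1,s} <> K_{1,t} is adjacent to every other vertex, so all
   distances are 0, 1 or 2.  In such a graph two vertices outside a strong metric generator
   must be adjacent, and two adjacent vertices are strongly resolved by a third one exactly
   when it is adjacent to only one of them.  Hence the strong metric dimension is |V| - k
   where k bounds every clique and is attained by a clique whose vertices are pairwise
   distinguished by outside neighbours.  A clique containing a vertex (a,0) or (0,b) with a
   single zero coordinate has at most one vertex of each zero pattern, hence at most 4
   vertices; any other clique is determined by its second coordinates, hence has at most
   t+1 vertices.  The diagonal {(i,i)} and the square {0,1}^2 attain max(t+1, 4). *)

Section GraphWithUniversalVertex.
Variables (T : finType) (e : rel T).
Hypothesis e_sym : symmetric e.
Variable c : T.
Hypothesis c_universal : forall v, v != c -> e c v.
Hypothesis card_gt2 : 2 < #|T|.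

Definition is_clique (K : {set T}) : Prop := {in K &, forall x y, x != y -> e x y}.

Definition separated (W : {set T}) : Prop :=
  {in W &, forall x y, x != y -> exists2 z, z \notin W & e x z != e y z}.

Lemma walk_of_len0 x y : walk_of_len e x y 0 = (x == y).
Proof.
apply/existsP/idP => [[p /andP[_]]|/eqP->]; first by rewrite (tuple0 p).
by exists [tuple]; rewrite /= eqxx.
Qed.

Lemma walk_of_len1 x y : walk_of_len e x y 1 = e x y.
Proof.
apply/existsP/idP => [[[[|a [|b l]] //= _]]|exy].
  by rewrite andbT => /andP[exy /eqP<-].
by exists [tuple y]; rewrite /= exy eqxx.
Qed.

Lemma walk_of_len2 x y w : e x w -> e w y -> walk_of_len e x y 2.
Proof. by move=> exw ewy; apply/existsP; exists [tuple w; y]; rewrite /= exw ewy eqxx. Qed.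

Lemma distE x y : dist e x y = if x == y then 0 else if e x y then 1 else 2.
Proof.
rewrite /dist -(subnKC card_gt2) iotaD /= walk_of_len0 walk_of_len1.
have [//|nxy] := eqVneq x y; case exy: (e x y) => //.
have xc : x != c by apply: contraFneq _ exy => xc; rewrite xc c_universal // -xc eq_sym.
have yc : y != c by apply: contraFneq _ exy => yc; rewrite yc e_sym c_universal // -yc.
suff -> : walk_of_len e x y 2 by [].
by apply: (walk_of_len2 (w := c)); rewrite ?c_universal // e_sym c_universal.
Qed.

Lemma strongly_resolvesE z x y : x != y -> z != x -> z != y ->
  strongly_resolves e z x y = e x y && (e x z != e y z).
Proof.
move=> nxy nzx nzy.
have nyx : y != x by rewrite eq_sym.
have nxz : x != z by rewrite eq_sym.
have nyz : y != z by rewrite eq_sym.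
rewrite /strongly_resolves !distE (negbTE nxy) (negbTE nyx) (negbTE nxz) (negbTE nyz) (e_sym y x).
by case: (e x y); case: (e x z); case: (e y z).
Qed.

Lemma strongly_resolves_self x y : strongly_resolves e x x y && strongly_resolves e y x y.
Proof. by rewrite /strongly_resolves !distE !eqxx !addn0 !eqxx orbT. Qed.

Lemma generator_compl_clique S : strong_metric_generator e S -> is_clique (~: S).
Proof.
move=> /forallP gS x y; rewrite !inE => xS yS nxy.
have /existsP[z /andP[zS]] := implyP (forallP (gS x) y) nxy.
have nzx : z != x by apply: contraNneq xS => <-.
have nzy : z != y by apply: contraNneq yS => <-.
by rewrite strongly_resolvesE // => /andP[].
Qed.

Lemma separated_clique_generator W :
  is_clique W -> separated W -> strong_metric_generator e (~: W).
Proof.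
move=> cW sW; apply/forallP => x; apply/forallP => y; apply/implyP => nxy.
have [xW|xW] := boolP (x \in W); last first.
  by apply/existsP; exists x; rewrite inE xW; case/andP: (strongly_resolves_self x y).
have [yW|yW] := boolP (y \in W); last first.
  by apply/existsP; exists y; rewrite inE yW; case/andP: (strongly_resolves_self x y).
have [z zW exyz] := sW x y xW yW nxy.
have nzx : z != x by apply: contraNneq zW => ->.
have nzy : z != y by apply: contraNneq zW => ->.
by apply/existsP; exists z; rewrite inE zW /= strongly_resolvesE // exyz cW.
Qed.

Lemma sdim_max_clique k W : (forall K, is_clique K -> #|K| <= k) ->
  is_clique W -> separated W -> #|W| = k -> sdim e = #|T| - k.
Proof.
move=> clique_le cW sW cardW; rewrite /sdim.
have gT : strong_metric_generator e [set: T].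
  by rewrite -setC0; apply: separated_clique_generator => x; rewrite inE.
case: arg_minnP => // S gS minS; apply/eqP; rewrite eqn_leq.
rewrite (leq_trans (minS _ (separated_clique_generator cW sW))) /=.
  by rewrite [#|S|]cardsCs leq_sub2l // clique_le //; apply: generator_compl_clique.
by rewrite [#|~: W|]cardsCs setCK cardW.
Qed.

End GraphWithUniversalVertex.

Definition star_nat (i j : nat) : bool := (i != j) && ((i == 0) || (j == 0)).

Definition mprod_nat (a b a' b' : nat) : bool :=
  ((a != a') || (b != b')) &&
  [|| (a == a') && star_nat b b', star_nat a a' && (b == b'), star_nat a a' && star_nat b b'
    | [&& a != a', b != b', ~~ star_nat a a' & ~~ star_nat b b']].

(* Adjacency in the modular product of two stars only depends on which coordinates
   coincide or vanish, so the facts below are decided by case analysis on these equalities. *)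
Ltac nat_eq_cases :=
  rewrite ?/mprod_nat ?/star_nat;
  repeat match goal with
  | |- context [if @eq_op _ ?x ?y then _ else _] =>
      case: (x =P y) => ?; subst; rewrite ?eqxx /=
  | |- context [@eq_op _ ?x ?y] =>
      let T := type of x in unify T nat;
      case: (x =P y) => ?; subst; rewrite ?eqxx /=
  end; done.

Lemma mprod_nat_sym a b a' b' : mprod_nat a b a' b' = mprod_nat a' b' a b.
Proof. nat_eq_cases. Qed.

Lemma mprod_nat_center a b : (a != 0) || (b != 0) -> mprod_nat 0 0 a b.
Proof. nat_eq_cases. Qed.

Lemma mprod_nat_same_pattern a b a' b' :
  (a == 0) = (a' == 0) -> (b == 0) = (b' == 0) -> mprod_nat a b a' b' ->
  (a != 0) && (b != 0).
Proof. nat_eq_cases. Qed.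

Lemma mprod_nat_mixed_triangle a b a1 b1 a2 b2 : (a == 0) != (b == 0) ->
  [&& a1 != 0, b1 != 0, a2 != 0 & b2 != 0] ->
  mprod_nat a b a1 b1 -> mprod_nat a b a2 b2 -> ~~ mprod_nat a1 b1 a2 b2.
Proof. nat_eq_cases. Qed.

Lemma mprod_nat_balanced a1 a2 b : (a1 == 0) = (b == 0) -> (a2 == 0) = (b == 0) ->
  ~~ mprod_nat a1 b a2 b.
Proof. nat_eq_cases. Qed.

Lemma mprod_nat_diag i j : i != j -> mprod_nat i i j j.
Proof. nat_eq_cases. Qed.

Definition diag_witness (i j : nat) : nat :=
  if i == 0 then (if j == 1 then 2 else 1)
  else if j == 0 then (if i == 1 then 2 else 1) else i.

Lemma diag_witness_separates i j : i != j ->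
  mprod_nat i i 0 (diag_witness i j) != mprod_nat j j 0 (diag_witness i j).
Proof. rewrite /diag_witness; nat_eq_cases. Qed.

Lemma diag_witness_neq0 i j : diag_witness i j != 0.
Proof. rewrite /diag_witness; nat_eq_cases. Qed.

Lemma diag_witness_le i j n : 2 <= n -> i <= n -> j <= n -> diag_witness i j <= n.
Proof. by move=> n2 *; rewrite /diag_witness; do !case: ifP => _; rewrite // (leq_trans _ n2). Qed.

Definition square_witnesses : seq (nat * nat) := [:: (0, 2); (1, 2); (2, 2); (2, 0); (2, 1)].

Lemma square_witnesses_separate (p q p' q' : bool) : (p, q) != (p', q') ->
  has (fun z => mprod_nat p q z.1 z.2 != mprod_nat p' q' z.1 z.2) square_witnesses.
Proof. by case: p q p' q' => [] [] [] []. Qed.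

Lemma mprod_nat_bool (p q p' q' : bool) : (p, q) != (p', q') -> mprod_nat p q p' q'.
Proof. by case: p q p' q' => [] [] [] []. Qed.

Section StarModularProduct.
Variables s t : nat.
Hypothesis t_ge2 : 2 <= t.
Hypothesis t_le_s : t <= s.
Local Notation V := ('I_s.+1 * 'I_t.+1)%type.
Local Notation E := (modular_product (star s) (star t)).

Lemma modular_product_starE (u v : V) : E u v = mprod_nat u.1 u.2 v.1 v.2.
Proof.
case: u v => [a b] [a' b'].
by rewrite /modular_product /mprod_nat /star_nat /star /= xpair_eqE negb_and.
Qed.

Lemma modular_product_star_sym : symmetric E.
Proof. by move=> u v; rewrite !modular_product_starE mprod_nat_sym. Qed.

Lemma modular_product_star_center (v : V) : v != (ord0, ord0) -> E (ord0, ord0) v.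
Proof.
move=> nv; rewrite modular_product_starE mprod_nat_center //.
by move: nv; case: v => a b; rewrite xpair_eqE negb_and -!val_eqE.
Qed.

Lemma card_modular_product_star : #|{: V}| = s.+1 * t.+1.
Proof. by rewrite card_prod !card_ord. Qed.

Lemma modular_product_star_clique_le (K : {set V}) :
  is_clique E K -> #|K| <= maxn t.+1 4.
Proof.
move=> cK; have adjK x y : x \in K -> y \in K -> x != y -> mprod_nat x.1 x.2 y.1 y.2.
  by move=> xK yK nxy; rewrite -modular_product_starE cK.
case: (boolP [exists v in K, (v.1 == 0 :> nat) != (v.2 == 0 :> nat)]).
- case/exists_inP => v vK vmixed.
  rewrite -(card_in_imset (f := fun u : V => (u.1 == 0 :> nat, u.2 == 0 :> nat))); last first.
    move=> x y xK yK [px py]; apply: contraTeq isT => nxy.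
    have exy := adjK x y xK yK nxy.
    have x12 := mprod_nat_same_pattern px py exy.
    have y12 : (y.1 != 0 :> nat) && (y.2 != 0 :> nat) by rewrite -px -py.
    have nvu (u : V) : (u.1 != 0 :> nat) && (u.2 != 0 :> nat) -> v != u.
      by case/andP=> u1 u2; apply: contraNneq vmixed => ->; rewrite (negbTE u1) (negbTE u2).
    suff : ~~ mprod_nat x.1 x.2 y.1 y.2 by rewrite exy.
    apply: (mprod_nat_mixed_triangle vmixed _
      (adjK v x vK xK (nvu x x12)) (adjK v y vK yK (nvu y y12))).
    by case/andP: x12 => -> ->; case/andP: y12 => -> ->.
  by rewrite (leq_trans (max_card _)) // card_prod card_bool leq_maxr.
- rewrite negb_exists_in => /forall_inP balanced.
  rewrite -(card_in_imset (f := fun u : V => u.2)); last first.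
    move=> x y xK yK /= xy2; apply: contraTeq isT => nxy.
    have := adjK x y xK yK nxy; rewrite -xy2 (negbTE (mprod_nat_balanced _ _)) //.
    + by move/negPn/eqP: (balanced x xK).
    + by rewrite xy2; move/negPn/eqP: (balanced y yK).
  by rewrite (leq_trans (max_card _)) // card_ord leq_maxl.
Qed.

Definition vtx (a b : nat) : V := (inord a, inord b).

Lemma vtx1 a b : a <= s -> (vtx a b).1 = a :> nat.
Proof. exact: inordK. Qed.

Lemma vtx2 a b : b <= t -> (vtx a b).2 = b :> nat.
Proof. exact: inordK. Qed.

Lemma vtx_inj a b a' b' : a <= s -> b <= t -> a' <= s -> b' <= t ->
  vtx a b = vtx a' b' -> (a, b) = (a', b').
Proof.
move=> a_le b_le a'_le b'_le /(congr1 (fun v : V => (v.1 : nat, v.2 : nat))).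
by rewrite /= !vtx1 ?vtx2.
Qed.

Lemma modular_product_star_vtx a b a' b' : a <= s -> b <= t -> a' <= s -> b' <= t ->
  E (vtx a b) (vtx a' b') = mprod_nat a b a' b'.
Proof. by move=> *; rewrite modular_product_starE !vtx1 ?vtx2. Qed.

Definition diag_clique : {set V} := [set vtx i i | i : 'I_t.+1].

Definition square_clique : {set V} := [set vtx pq.1 pq.2 | pq : bool * bool].

Lemma diag_clique_separated :
  [/\ is_clique E diag_clique, separated E diag_clique & #|diag_clique| = t.+1].
Proof.
have le_t (i : 'I_t.+1) : i <= t by rewrite -ltnS.
have le_s (i : 'I_t.+1) : i <= s by rewrite (leq_trans (le_t i)).
split.
- move=> _ _ /imsetP[i _ ->] /imsetP[j _ ->] nij.
  rewrite modular_product_star_vtx // mprod_nat_diag //.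
  by apply: contraNneq nij => /val_inj ->.
- move=> _ _ /imsetP[i _ ->] /imsetP[j _ ->] nij.
  have wit_le : diag_witness i j <= t by rewrite diag_witness_le.
  exists (vtx 0 (diag_witness i j)).
    apply/imsetP => -[k _ /vtx_inj]; rewrite le_s le_t => /(_ isT wit_le isT isT) [k0 wk].
    by move: (diag_witness_neq0 i j); rewrite wk -k0.
  rewrite !modular_product_star_vtx //; apply: diag_witness_separates.
  by apply: contraNneq nij => /val_inj ->.
- rewrite card_in_imset ?card_ord // => i j _ _ /vtx_inj.
  by rewrite !le_s !le_t => /(_ isT isT isT isT) [/val_inj].
Qed.

Lemma square_clique_separated :
  [/\ is_clique E square_clique, separated E square_clique & #|square_clique| = 4].
Proof.
have le_t (b : bool) : b <= t by rewrite (leq_trans (leq_b1 b)) // ltnW.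
have le_s (b : bool) : b <= s by rewrite (leq_trans (le_t b)).
split.
- move=> _ _ /imsetP[[p q] _ ->] /imsetP[[p' q'] _ ->] npq.
  rewrite modular_product_star_vtx // mprod_nat_bool //.
  by apply: contraNneq npq => ->.
- move=> _ _ /imsetP[[p q] _ ->] /imsetP[[p' q'] _ ->] npq.
  have /square_witnesses_separate/hasP[[a b] wit sep] : (p, q) != (p', q').
    by apply: contraNneq npq => ->.
  have /and3P[a_le b_le ab2] : [&& a <= 2, b <= 2 & (a == 2) || (b == 2)].
    by move: wit; rewrite !inE => /orP[|/orP[|/orP[|/orP[]]]] /eqP[-> ->].
  have a_le_s : a <= s by rewrite (leq_trans a_le) // (leq_trans t_ge2).
  have b_le_t : b <= t by rewrite (leq_trans b_le).
  exists (vtx a b); last by rewrite !modular_product_star_vtx.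
  apply/imsetP => -[[p'' q''] _ /vtx_inj]; rewrite le_s le_t => /(_ a_le_s b_le_t isT isT).
  by move: ab2 => /[swap] -[-> ->]; case: p'' q'' => [] [].
- rewrite card_in_imset ?card_prod ?card_bool // => -[p q] [p' q'] _ _ /vtx_inj.
  by rewrite !le_s !le_t => /(_ isT isT isT isT); case: p q p' q' => [] [] [] [].
Qed.
End StarModularProduct.

Theorem mainTheorem8 (s t : nat) (ht : 2 <= t) (hts : t <= s) :
  sdim (modular_product (star s) (star t)) =
  (if t == 2 then s * t + s - 1 else s * t + s).
Proof.
pose E := modular_product (star s) (star t).
have [W [W_clique W_separated W_card]] :
    exists W, [/\ is_clique E W, separated E W & #|W| = maxn t.+1 4].
  case: (leqP t.+1 4) => _.
  - by exists (square_clique s t); apply: square_clique_separated.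
  - by exists (diag_clique s t); apply: diag_clique_separated.
have card_gt2 : 2 < #|{: 'I_s.+1 * 'I_t.+1}| by rewrite card_modular_product_star; nia.
rewrite (sdim_max_clique (@modular_product_star_sym s t) (@modular_product_star_center s t)
  card_gt2 (@modular_product_star_clique_le s t) W_clique W_separated W_card).
by rewrite card_modular_product_star; case: eqP => [->|]; nia.
Qed.
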